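(* Let $m$ be a square-free integer and let $B$ be a commutative algebra over $A=\mathbb{Z}/m\mathbb{Z}$ that is free of finite rank as an $A$-module. If $p>\operatorname{rk}_A(B)$ for all primes $p$ dividing $m$, then $\operatorname{Trad}(B/A)=\operatorname{nil}(B)$.
   Context: For commutative rings $A\subseteq B$ with $B$ free of finite rank over $A$, $\operatorname{Tr}_{B/A}:B\to A$ sends $x$ to the trace of the $A$-linear map $y\mapsto xy$ on $B$, and the trace radical is $\operatorname{Trad}(B/A)=\{x\in B: \operatorname{Tr}_{B/A}(xB)=0\}$. $\operatorname{nil}(B)$ is the ideal of nilpotent elements of $B$. *)

From HB Require Import structures.
From mathcomp Require Import all_boot all_order all_algebra.
Set Implicit Arguments. Unset Strict Implicit. Unset Printing Implicit Defensive.
Import GRing.Theory.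
Local Open Scope ring_scope.

Definition squarefree (m : nat) : Prop :=
  forall p : nat, prime p -> ~~ (p * p %| m)%N.

(* Trace Tr_{B/A}(x): trace of the A-linear map y |-> x*y, computed in the
   coordinates given by a linear isomorphism phi : B -> A^n with inverse psi. *)
Definition algTrace (A : comNzRingType) (B : comAlgType A) (n : nat)
  (phi : B -> 'rV[A]_n) (psi : 'rV[A]_n -> B) (x : B) : A :=
  \tr (lin1_mx (fun v : 'rV[A]_n => phi (x * psi v))).

Definition in_Trad (A : comNzRingType) (B : comAlgType A) (n : nat)
  (phi : B -> 'rV[A]_n) (psi : 'rV[A]_n -> B) (x : B) : Prop :=
  forall y : B, algTrace phi psi (x * y) = 0.

Definition is_nilpotent (R : pzRingType) (x : R) : Prop :=
  exists k : nat, x ^+ k = 0.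

From HB Require Import structures.
From mathcomp Require Import all_boot all_order all_algebra.
From mathcomp Require Import ring.
Set Implicit Arguments. Unset Strict Implicit. Unset Printing Implicit Defensive.
Import GRing.Theory.
Local Open Scope ring_scope.

(* Let L_x be the matrix of multiplication by x, so that Tr(x) = tr L_x and
   x |-> L_x is a faithful ring morphism. As m is squarefree, an element of Z/m
   vanishes iff it vanishes modulo every prime p | m, and reduction commutes with
   traces and powers, so everything can be checked over F_p. There a nilpotent
   matrix has characteristic polynomial X^n, hence trace 0. Conversely, if
   tr(M^k) = 0 for all k > 0, Cayley-Hamilton gives M^n = M^n M u(M) for some
   polynomial u, so e = M^n u(M)^n is an idempotent with M^n = e M^n. Its trace is
   that of a polynomial in M without constant term, hence 0, but it is also
   rank e, and rank e <= n < p then forces e = 0. *)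

Lemma squarefree_logn m p :
  squarefree m -> (0 < m)%N -> prime p -> (p %| m)%N -> logn p m = 1%N.
Proof.
move=> sqf m_gt0 p_pr p_dvd_m; apply/eqP; rewrite eqn_leq.
rewrite -(pfactor_dvdn 1 p_pr) // expn1 p_dvd_m andbT leqNgt.
by rewrite -(pfactor_dvdn 2 p_pr) // -mulnn (negbTE (sqf p p_pr)).
Qed.

Lemma squarefree_dvdn m d : squarefree m -> (0 < m)%N ->
  (forall p, prime p -> (p %| m)%N -> (p %| d)%N) -> (m %| d)%N.
Proof.
move=> sqf m_gt0 dvd_d; apply/dvdn_partP => // p; rewrite mem_primes.
case/and3P=> p_pr _ p_dvd_m.
by rewrite p_part squarefree_logn // expn1 dvd_d.
Qed.

Lemma ltn_Zp m (x : 'Z_m) : (1 < m)%N -> (x < m)%N.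
Proof. by move=> m_gt1; rewrite -[m in (_ < m)%N]Zp_cast ?ltn_ord. Qed.

(* The proofs are arguments so that the ring morphism instance declared below
   is found by unification outside the section. *)
Definition Zp_to_Fp m p (m_gt1 : (1 < m)%N) (p_pr : prime p) (p_dvd_m : (p %| m)%N)
  (x : 'Z_m) : 'F_p := (x : nat)%:R.

Section ReductionModPrime.
Variables (m p : nat) (m_gt1 : (1 < m)%N) (p_pr : prime p) (p_dvd_m : (p %| m)%N).
Local Notation red := (Zp_to_Fp m_gt1 p_pr p_dvd_m).

Lemma natr_Fp_eq0 a : ((a%:R : 'F_p) == 0) = (p %| a)%N.
Proof. by rewrite (dvdn_pcharf (pchar_Fp p_pr)). Qed.

Lemma natrm_Fp : m%:R = 0 :> 'F_p.
Proof. by apply/eqP; rewrite natr_Fp_eq0. Qed.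

Lemma Fp_nat_mod_dvd a : ((a %% m)%N%:R : 'F_p) = a%:R.
Proof. by rewrite {2}(divn_eq a m) natrD natrM natrm_Fp mulr0 add0r. Qed.

Lemma red_natr a : red a%:R = a%:R.
Proof. by rewrite /Zp_to_Fp val_Zp_nat // Fp_nat_mod_dvd. Qed.

Lemma red_is_zmod_morphism : zmod_morphism red.
Proof.
move=> x y; have y_le_m : (y <= m)%N by rewrite ltnW ?ltn_Zp.
have -> : x - y = (x + (m - y))%:R :> 'Z_m.
  by rewrite natrD natrB // pchar_Zp // add0r !natr_Zp.
by rewrite red_natr natrD natrB // natrm_Fp add0r.
Qed.

Lemma red_is_monoid_morphism : monoid_morphism red.
Proof.
split=> [|x y]; first exact: red_natr 1.
by rewrite -[x]natr_Zp -[y]natr_Zp -natrM !red_natr natrM.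
Qed.

HB.instance Definition _ := GRing.isZmodMorphism.Build _ _ red red_is_zmod_morphism.
HB.instance Definition _ := GRing.isMonoidMorphism.Build _ _ red red_is_monoid_morphism.

Lemma red_eq0 x : (red x == 0) = (p %| x)%N.
Proof. exact: natr_Fp_eq0. Qed.

End ReductionModPrime.

Section SquarefreeModulus.
Variables (m : nat) (m_gt1 : (1 < m)%N) (sqf : squarefree m).

Lemma Zp_eq0_of_red (x : 'Z_m) :
  (forall p (p_pr : prime p) (p_dvd_m : (p %| m)%N), Zp_to_Fp m_gt1 p_pr p_dvd_m x = 0) ->
  x = 0.
Proof.
move=> red_x0; have : (m %| x)%N.
  apply: squarefree_dvdn => // [|p p_pr p_dvd_m]; first exact: ltnW.
  by rewrite -(red_eq0 m_gt1 p_pr p_dvd_m) red_x0.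
by rewrite /dvdn modn_small ?ltn_Zp // => /eqP x0; apply: val_inj.
Qed.

Lemma mx_eq0_of_red r c (M : 'M['Z_m]_(r, c)) :
  (forall p (p_pr : prime p) (p_dvd_m : (p %| m)%N),
     map_mx (Zp_to_Fp m_gt1 p_pr p_dvd_m) M = 0) ->
  M = 0.
Proof.
move=> red_M0; apply/matrixP => i j; rewrite mxE.
apply: Zp_eq0_of_red => p p_pr p_dvd_m.
by have /matrixP/(_ i j) := red_M0 p p_pr p_dvd_m; rewrite !mxE.
Qed.

End SquarefreeModulus.

Lemma mxtrace_pid (R : pzRingType) n r :
  (r <= n)%N -> \tr (pid_mx r : 'M[R]_n) = r%:R.
Proof.
move=> le_rn; rewrite /mxtrace.
rewrite (eq_bigr (fun i : 'I_n => if (i < r)%N then 1 else 0)) => [|i _]; last first.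
  by rewrite mxE eqxx; case: ltnP.
rewrite -big_mkcond -(big_ord_widen _ (fun _ => 1) le_rn) /=.
by rewrite sumr_const card_ord.
Qed.

Section FieldMatrices.
Variable F : fieldType.

Lemma mxtrace_idem n (E : 'M[F]_n) : E *m E = E -> \tr E = (\rank E)%:R.
Proof.
have := mulmx_ebase E; set L := col_ebase E; set U := row_ebase E; set r := \rank E.
have uL : L \in unitmx := col_ebase_unit E.
have uU : U \in unitmx := row_ebase_unit E.
have le_rn : (r <= n)%N := rank_leq_row E.
clearbody L U r => <- idemE.
have pid_UL_pid : pid_mx r *m (U *m L) *m pid_mx r = pid_mx r :> 'M_n.
  apply: (can_inj (mulmxK uU)); apply: (can_inj (mulKmx uL)).
  by move: idemE; rewrite !mulmxA.
rewrite -mulmxA mxtrace_mulC -{1}(@pid_mx_id F n n n r le_rn) -!mulmxA mxtrace_mulC.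
by rewrite !mulmxA -(mulmxA _ U) pid_UL_pid mxtrace_pid.
Qed.

Lemma mxtrace_horner_Xmul n (M : 'M[F]_n.+1) (r : {poly F}) :
  (forall k, (0 < k)%N -> \tr (M ^+ k) = 0) -> \tr (horner_mx M ('X * r)) = 0.
Proof.
move=> trM0; rewrite -[r]coefK poly_def mulr_sumr rmorph_sum raddf_sum big1 // => i _.
by rewrite -scalerAr -exprS /= horner_mxZ mxtraceZ rmorphXn /= horner_mx_X trM0 ?mulr0.
Qed.

Lemma horner_mx_Xn_fitting n (M : 'M[F]_n.+1) :
  exists u : {poly F}, horner_mx M ('X^(n.+1)) = horner_mx M ('X^(n.+1) * ('X * u)).
Proof.
have chi_neq0 : char_poly M != 0 := monic_neq0 (char_poly_monic M).
have [s [q]] := multiplicity_XsubC (char_poly M) 0.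
rewrite chi_neq0 polyC0 subr0 /= => q0_neq0 chiE.
have le_sN : (s <= n.+1)%N.
  have q_neq0 : q != 0 by apply: contraNneq chi_neq0 => q0; rewrite chiE q0 mul0r.
  have := size_char_poly M; rewrite chiE size_mul ?expf_neq0 ?polyX_eq0 //.
  rewrite size_polyXn addnS /= => sizeE.
  by rewrite -ltnS -sizeE -{1}[s]add0n ltn_add2r size_poly_gt0.
have Xnq_root : horner_mx M ('X^(n.+1) * q) = 0.
  have -> : 'X^(n.+1) * q = 'X^(n.+1 - s) * char_poly M.
    by rewrite chiE mulrCA -exprD subnK // mulrC.
  by rewrite rmorphM /= Cayley_Hamilton mulr0.
set c := q.[0] in q0_neq0.
have [h qE] : exists h, q = c%:P + 'X * h.
  have /factor_theorem[h hE] : root (q - c%:P) 0 by rewrite /root !hornerE subrr.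
  by exists h; rewrite polyC0 subr0 mulrC in hE; rewrite -hE addrC subrK.
exists (- c^-1 *: h).
have -> : 'X^(n.+1) * ('X * (- c^-1 *: h)) = 'X^(n.+1) - c^-1 *: ('X^(n.+1) * q).
  have cVc : c^-1%:P * c%:P = 1 by rewrite -polyCM mulVf.
  rewrite qE -!mul_polyC polyCN.
  transitivity ('X^(n.+1) * (1 - c^-1%:P * c%:P) + 'X^(n.+1) * ('X * (- c^-1%:P * h))).
    by rewrite cVc subrr mulr0 add0r.
  by ring.
by rewrite rmorphB /= horner_mxZ Xnq_root scaler0 subr0.
Qed.

Lemma nilpotent_of_trace_powers n (M : 'M[F]_n) :
  (forall r, (0 < r <= n)%N -> r%:R != 0 :> F) ->
  (forall k, (0 < k)%N -> \tr (M ^+ k) = 0) -> M ^+ n = 0.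
Proof.
case: n M => [|n] M natr_neq0 trM0; first by rewrite [LHS]flatmx0 [RHS]flatmx0.
have [u fitE] := horner_mx_Xn_fitting M.
have fitEX j : horner_mx M ('X^(n.+1)) = horner_mx M ('X^(n.+1) * ('X * u) ^+ j).
  elim: j => [|j IHj]; first by rewrite mulr1.
  by rewrite [_ ^+ j.+1]exprSr mulrA rmorphM /= -IHj -rmorphM; apply: fitE.
pose e := horner_mx M ('X^(n.+1) * u ^+ n.+1).
have MXn : M ^+ n.+1 = horner_mx M ('X^(n.+1)) by rewrite rmorphXn /= horner_mx_X.
have MnE : M ^+ n.+1 = e * M ^+ n.+1.
  rewrite MXn {1}(fitEX n.+1) -rmorphM /=.
  by congr (horner_mx M _); rewrite exprMn; ring.
have e_idem : e *m e = e.
  rewrite mulmxE -rmorphM /=.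
  have -> : 'X^(n.+1) * u ^+ n.+1 * ('X^(n.+1) * u ^+ n.+1)
          = 'X^(n.+1) * ('X * u) ^+ n.+1 * u ^+ n.+1 by rewrite exprMn; ring.
  by rewrite rmorphM /= -fitEX -rmorphM.
have tr_e0 : \tr e = 0 by rewrite /e exprS -mulrA mxtrace_horner_Xmul.
have : \rank e == 0%N.
  rewrite -[_ == _]negbK -lt0n; apply/negP => rank_gt0.
  have := natr_neq0 (\rank e); rewrite rank_gt0 rank_leq_row -mxtrace_idem //.
  by rewrite tr_e0 eqxx => /(_ isT).
by rewrite mxrank_eq0 => /eqP e0; rewrite MnE e0 mul0r.
Qed.

Lemma char_poly_nilpotent n (M : 'M[F]_n) k : M ^+ k = 0 -> char_poly M = 'X^n.
Proof.
move=> Mk0; set A := map_mx polyC M; pose X : 'M[{poly F}]_n := 'X%:M.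
have Ak0 : A ^+ k = 0 by rewrite /A -rmorphXn /= Mk0 map_mx0.
have /(subrXX_comm k) : GRing.comm X A by rewrite /GRing.comm -!mulmxE scalar_mxC.
rewrite Ak0 subr0; set S := \sum_(i < k) _ => XkE.
have : char_poly M %| ('X - 0%:P) ^+ (k * n).
  apply/dvdpP; exists (\det S).
  rewrite polyC0 subr0 mulrC -det_mulmx mulmxE -XkE.
  by rewrite /X -rmorphXn /= det_scalar exprM.
case/dvdp_exp_XsubCP=> j _; rewrite polyC0 subr0.
rewrite eqp_monic ?char_poly_monic ?monicXn // => /eqP chiE.
by have := size_char_poly M; rewrite chiE size_polyXn => -[->].
Qed.

Lemma mxtrace_nilpotent n (M : 'M[F]_n) k : M ^+ k = 0 -> \tr M = 0.
Proof.
case: n M => [|n] M /char_poly_nilpotent chiE; first by rewrite /mxtrace big_ord0.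
apply/eqP; rewrite -oppr_eq0 -char_poly_trace // chiE coefXn.
by rewrite eqn_leq ltnn andbF.
Qed.

End FieldMatrices.

Section RegularRepresentation.
Variables (R : comNzRingType) (B : comAlgType R) (n : nat).
Variables (phi : {linear B -> 'rV[R]_n}) (psi : 'rV[R]_n -> B).
Hypotheses (phiK : cancel phi psi) (psiK : cancel psi phi).

Definition mul_coord (x : B) (v : 'rV[R]_n) : 'rV[R]_n := phi (x * psi v).

Lemma mul_coord_is_linear x : linear (mul_coord x).
Proof.
have psi_linear : linear psi.
  by move=> a u v; apply: (can_inj phiK); rewrite linearP /= !psiK.
by move=> a u v; rewrite /mul_coord psi_linear mulrDr -scalerAr linearP.
Qed.

HB.instance Definition _ x :=
  GRing.isLinear.Build _ _ _ _ (mul_coord x) (mul_coord_is_linear x).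

Definition regmx x := lin1_mx (mul_coord x).

Lemma mul_regmx x y : phi y *m regmx x = phi (x * y).
Proof. by rewrite mul_rV_lin1 /= /mul_coord phiK. Qed.

Lemma regmx_eq (M : 'M[R]_n) x : (forall y, phi y *m M = phi (x * y)) -> regmx x = M.
Proof.
move=> MxE; apply/row_matrixP => i.
by rewrite !rowE -[delta_mx _ _]psiK mul_regmx MxE.
Qed.

Lemma regmx1 : regmx 1 = 1%:M.
Proof. by apply: regmx_eq => y; rewrite mulmx1 mul1r. Qed.

Lemma regmxM x y : regmx (x * y) = regmx x *m regmx y.
Proof. by apply: regmx_eq => z; rewrite mulmxA !mul_regmx mulrCA mulrA mulrC. Qed.

Lemma regmxX x k : regmx (x ^+ k) = regmx x ^+ k.
Proof.
elim: k => [|k IHk]; first exact: regmx1.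
by rewrite exprS regmxM IHk exprS.
Qed.

Lemma regmx0 : regmx 0 = 0.
Proof. by apply: regmx_eq => y; rewrite mulmx0 mul0r linear0. Qed.

Lemma regmx_eq0 x : (regmx x == 0) = (x == 0).
Proof.
apply/eqP/eqP=> [x0|->]; last exact: regmx0.
by rewrite -[x]mulr1 -[x * 1]phiK -mul_regmx x0 mulmx0 -(linear0 phi) phiK.
Qed.

End RegularRepresentation.

Theorem proposition5p20 (m : nat) (m_gt1 : (1 < m)%N) (sqf : squarefree m)
  (B : comAlgType 'Z_m) (n : nat)
  (phi : {linear B -> 'rV['Z_m]_n}) (psi : 'rV['Z_m]_n -> B)
  (phiK : cancel phi psi) (psiK : cancel psi phi)
  (hp : forall p : nat, prime p -> (p %| m)%N -> (n < p)%N) :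
  forall x : B, in_Trad phi psi x <-> is_nilpotent x.
Proof.
move=> x; have trE z : algTrace phi psi z = \tr (regmx phi psi z) by [].
have regmx_exp := regmxX phiK psiK.
split=> [x_trad | [k xk0] y].
- exists n; apply/eqP; rewrite -(regmx_eq0 phiK psiK) regmx_exp; apply/eqP.
  apply: (mx_eq0_of_red (m_gt1 := m_gt1) sqf) => p p_pr p_dvd_m.
  rewrite rmorphXn /=.
  apply: nilpotent_of_trace_powers => [r /andP[r_gt0 r_le_n] | k k_gt0].
    by rewrite natr_Fp_eq0 // gtnNdvd // (leq_ltn_trans r_le_n) ?hp.
  rewrite -rmorphXn /= trace_map_mx -regmx_exp -trE -(prednK k_gt0) exprS.
  by rewrite x_trad rmorph0.
- rewrite trE; apply: (Zp_eq0_of_red (m_gt1 := m_gt1) sqf) => p p_pr p_dvd_m.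
  rewrite -trace_map_mx; apply: (mxtrace_nilpotent (k := k)).
  by rewrite -rmorphXn /= -regmx_exp exprMn xk0 mul0r (regmx0 phiK psiK) map_mx0.
Qed.
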